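(* Let $\overline X$ be a triangle-free, square-free simplicial graph no connected component of which is a single vertex, and let $X$ be the blowup of $\overline X$ with respect to non-empty graphs $\{L_v\}$. Let $\Sigma,\Delta$ be non-maximal simplices of $X$. Then there exist (possibly empty or maximal) simplices $\Pi,\Psi$ of $X$ with $\Sigma\subseteq\Pi$ such that $\mathrm{Lk}(\Sigma)\cap\mathrm{Lk}(\Delta)=\mathrm{Lk}(\Pi)\star\Psi$.
   Context: Graphs are simplicial; a simplex is a (possibly empty) clique. For a simplex $\Delta$, $\mathrm{Lk}(\Delta)$ is the subgraph spanned by vertices not in $\Delta$ adjacent to every vertex of $\Delta$ ($\mathrm{Lk}(\emptyset)=X$). $\star$ denotes join. Blowup: $X$ is obtained from $\overline X$ by replacing each vertex $v$ by $\mathrm{Squid}(v)$, the star with centre $v$ and leaf set $L_v^{(0)}$ (no edges among leaves). For $\overline X$-adjacent $v,w$, every vertex of $\mathrm{Squid}(v)$ is adjacent to every vertex of $\mathrm{Squid}(w)$; there are no other edges. *)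

From Stdlib Require Import List.
Set Implicit Arguments.

Section Graphs.
Variable T : Type.
Variable adj : T -> T -> Prop.

Definition simplicial_graph : Prop :=
  (forall x y, adj x y -> adj y x) /\ (forall x, ~ adj x x).

Definition triangle_free : Prop :=
  forall a b c, adj a b -> adj b c -> adj c a -> False.

Definition square_free : Prop :=
  forall a b c d, a <> c -> b <> d ->
    adj a b -> adj b c -> adj c d -> adj d a -> False.

Definition no_isolated_vertex : Prop := forall v, exists w, adj v w.

Definition simplex (S : T -> Prop) : Prop :=
  (forall x y, S x -> S y -> x <> y -> adj x y) /\
  (exists l : list T, forall x, S x <-> In x l).

Definition maximal_simplex (S : T -> Prop) : Prop :=
  simplex S /\
  forall S', simplex S' -> (forall x, S x -> S' x) -> forall x, S' x -> S x.

(* vertex set of Lk(S) (an induced subgraph); Lk(empty) = everything *)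
Definition link (S : T -> Prop) : T -> Prop :=
  fun x => ~ S x /\ forall y, S y -> adj x y.

(* A = B * C as induced subgraphs of the ambient graph:
   A is the disjoint union of B and C with all B--C edges present. *)
Definition is_join (A B C : T -> Prop) : Prop :=
  (forall x, A x <-> B x \/ C x) /\
  (forall x, ~ (B x /\ C x)) /\
  (forall x y, B x -> C y -> adj x y).
End Graphs.

(* Blowup of (V, E) w.r.t. leaf sets L v: vertex (v; None) is the centre v,
   (v; Some l) is the leaf l of Squid(v). *)
Definition blowup_vertex (V : Type) (L : V -> Type) : Type :=
  {v : V & option (L v)}.

Definition is_centre (V : Type) (L : V -> Type) (x : blowup_vertex L) : Prop :=
  projT2 x = None.

Definition blowup_adj (V : Type) (E : V -> V -> Prop) (L : V -> Type)
  (x y : blowup_vertex L) : Prop :=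
  E (projT1 x) (projT1 y) \/
  (projT1 x = projT1 y /\
   ((is_centre x /\ ~ is_centre y) \/ (~ is_centre x /\ is_centre y))).

From Stdlib Require Import List Classical ClassicalEpsilon.
Import ListNotations.

(* Lk(Sigma) ∩ Lk(Delta) = Lk(U) for U = Sigma ∪ Delta, so it suffices to
   decompose Lk(U) for a finite set U containing the simplex Sigma.  A vertex
   of the blowup lies in Lk(U) iff its base vertex is adjacent to every other
   base vertex of U, and U has no vertex of the same kind (centre or leaf) over
   the same base.  If the base of U is a clique, Lk(U) = Lk(Pi) for the clique
   Pi obtained from U by keeping one leaf over each base vertex.  Otherwise U
   has two non-adjacent base vertices, and square-freeness leaves at most one
   base vertex z for Lk(U); triangle-freeness puts Sigma over an edge zy, and
   Lk(U) is the set of leaves over z (the link of a clique over zy), joined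
   with the centre z when U has no centre over z. *)

Lemma finite_of_sublist {T : Type} (S : T -> Prop) l :
  (forall x, S x -> In x l) -> exists l', forall x, S x <-> In x l'.
Proof.
  intros HSl.
  exists (filter (fun x => if excluded_middle_informative (S x) then true else false) l).
  intros x; rewrite filter_In.
  destruct (excluded_middle_informative (S x)); split; intuition; discriminate.
Qed.

Section Links.
Variables (T : Type) (adj : T -> T -> Prop).

Lemma simplex_empty : simplex adj (fun _ => False).
Proof. split; [tauto | exists nil; simpl; tauto]. Qed.

Lemma link_union (S D : T -> Prop) x :
  link adj S x /\ link adj D x <-> link adj (fun y => S y \/ D y) x.
Proof. unfold link; firstorder. Qed.

Lemma is_join_ext (A A' B C : T -> Prop) :
  (forall x, A x <-> A' x) -> is_join adj A' B C -> is_join adj A B C.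
Proof. intros HA [HJ HJ']; split; [intros x; rewrite HA | ]; auto. Qed.

Lemma is_join_empty (A B : T -> Prop) :
  (forall x, A x <-> B x) -> is_join adj A B (fun _ => False).
Proof. intros HAB; repeat split; firstorder. Qed.

End Links.

Section Blowup.
Variables (V : Type) (E : V -> V -> Prop) (L : V -> Type).
Hypothesis HE : simplicial_graph E.

Notation B := (blowup_vertex L).
Notation X := (blowup_adj E (L:=L)).

Lemma E_sym a b : E a b -> E b a.
Proof. exact (proj1 HE a b). Qed.

Lemma E_irrefl a : ~ E a a.
Proof. exact (proj2 HE a). Qed.

Definition centre_over (S : B -> Prop) v :=
  exists x, S x /\ projT1 x = v /\ projT2 x = None.
Definition leaf_over (S : B -> Prop) v :=
  exists x, S x /\ projT1 x = v /\ projT2 x <> None.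
Definition base_adjacent (S : B -> Prop) v :=
  forall x, S x -> projT1 x <> v -> E (projT1 x) v.

Lemma link_blowupE (S : B -> Prop) x :
  link X S x <->
  base_adjacent S (projT1 x) /\
  (projT2 x = None -> ~ centre_over S (projT1 x)) /\
  (projT2 x <> None -> ~ leaf_over S (projT1 x)).
Proof.
  unfold link, blowup_adj, is_centre, base_adjacent, centre_over, leaf_over.
  split.
  - intros [HxS Hadj]; split; [ | split].
    + intros u Hu Hne; destruct (Hadj u Hu) as [H | [H _]].
      * now apply E_sym.
      * now destruct Hne.
    + intros Hx [y [Hy [Hy1 Hy2]]]; destruct (Hadj y Hy) as [H | [_ H]].
      * rewrite Hy1 in H; exact (E_irrefl _ H).
      * tauto.
    + intros Hx [y [Hy [Hy1 Hy2]]]; destruct (Hadj y Hy) as [H | [_ H]].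
      * rewrite Hy1 in H; exact (E_irrefl _ H).
      * tauto.
  - intros [Hbase [Hc Hl]]; split.
    + intros HxS; destruct (classic (projT2 x = None)) as [h | h].
      * apply (Hc h); now exists x.
      * apply (Hl h); now exists x.
    + intros y Hy; destruct (classic (projT1 y = projT1 x)) as [h | h].
      * right; split; [now symmetry | ].
        destruct (classic (projT2 x = None)) as [hx | hx];
          destruct (classic (projT2 y = None)) as [hy | hy]; auto.
        -- exfalso; apply (Hc hx); now exists y.
        -- exfalso; apply (Hl hx); now exists y.
      * left; apply E_sym; auto.
Qed.

Lemma link_blowup_ext (S S' : B -> Prop) :
  (forall v, base_adjacent S v <-> base_adjacent S' v) ->
  (forall v, centre_over S v <-> centre_over S' v) ->
  (forall v, leaf_over S v <-> leaf_over S' v) ->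
  forall x, link X S x <-> link X S' x.
Proof.
  intros Hb Hc Hl x; rewrite !link_blowupE, Hb, Hc, Hl; tauto.
Qed.

Lemma centre_eq (x w : B) :
  projT1 x = projT1 w -> projT2 x = None -> projT2 w = None -> x = w.
Proof. destruct x, w; simpl; intros; subst; reflexivity. Qed.

Lemma simplex_leaf_unique (S : B -> Prop) x w :
  simplex X S -> S x -> S w -> projT1 x = projT1 w ->
  projT2 x <> None -> projT2 w <> None -> x = w.
Proof.
  intros [Hcl _] Hx Hw Hxw Hlx Hlw; apply NNPP; intros Hne.
  destruct (Hcl x w Hx Hw Hne) as [H | [_ H]].
  - rewrite Hxw in H; exact (E_irrefl _ H).
  - unfold is_centre in H; tauto.
Qed.

Definition chosen (c : forall v, L v) (x : B) :=
  projT2 x = None \/ projT2 x = Some (c (projT1 x)).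

Lemma chosen_eq (c : forall v, L v) (x w : B) :
  projT1 x = projT1 w -> projT2 x = Some (c (projT1 x)) ->
  projT2 w = Some (c (projT1 w)) -> x = w.
Proof. destruct x, w; simpl; intros; subst; reflexivity. Qed.

Lemma chosen_adj (c : forall v, L v) (x w : B) :
  x <> w -> projT1 x = projT1 w -> chosen c x -> chosen c w -> X x w.
Proof.
  intros Hne Hxw Hx Hw; right; split; [exact Hxw | unfold is_centre].
  destruct Hx as [Hx | Hx], Hw as [Hw | Hw].
  - now destruct Hne; apply centre_eq.
  - left; rewrite Hw; split; [exact Hx | discriminate].
  - right; rewrite Hx; split; [discriminate | exact Hw].
  - now destruct Hne; apply (chosen_eq c).
Qed.

Section LeafChoice.
Hypothesis HL : forall v, inhabited (L v).

(* A leaf of [S] over [v] if there is one, else a leaf of [U] over [v], else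
   an arbitrary leaf. *)
Definition pick_leaf (S U : B -> Prop) v : L v :=
  epsilon (HL v) (fun l => S (existT _ v (Some l)) \/
    (~ (exists l', S (existT _ v (Some l'))) /\ U (existT _ v (Some l)))).

Lemma pick_leaf_spec S U v l :
  S (existT _ v (Some l)) \/ U (existT _ v (Some l)) ->
  S (existT _ v (Some (pick_leaf S U v))) \/
  (~ (exists l', S (existT _ v (Some l'))) /\ U (existT _ v (Some (pick_leaf S U v)))).
Proof.
  intros Hl; unfold pick_leaf; apply epsilon_spec.
  destruct (classic (exists l', S (existT _ v (Some l')))) as [[l' Hl'] | Hno].
  - exists l'; now left.
  - exists l; right; split; [exact Hno | ].
    destruct Hl as [Hl | Hl]; [destruct Hno; now exists l | exact Hl].
Qed.

Lemma pick_leaf_in_U (S U : B -> Prop) x :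
  (forall y, S y -> U y) -> U x -> projT2 x <> None ->
  U (existT _ (projT1 x) (Some (pick_leaf S U (projT1 x)))).
Proof.
  destruct x as [v [l | ]]; simpl; intros HSU Hx Hl; [ | now destruct Hl].
  destruct (pick_leaf_spec S U v l (or_intror Hx)) as [H | [_ H]]; auto.
Qed.

Lemma simplex_chosen (S U : B -> Prop) x :
  simplex X S -> S x -> chosen (pick_leaf S U) x.
Proof.
  intros HS Hx; destruct (classic (projT2 x = None)) as [Hc | Hl]; [now left | right].
  assert (Hpick : S (existT _ (projT1 x) (Some (pick_leaf S U (projT1 x))))).
  { destruct x as [v [l | ]]; simpl in *; [ | now destruct Hl].
    destruct (pick_leaf_spec S U v l (or_introl Hx)) as [H | [Hno _]]; [exact H | ].
    destruct Hno; now exists l. }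
  now rewrite (simplex_leaf_unique S x _ HS Hx Hpick eq_refl Hl ltac:(discriminate)).
Qed.

End LeafChoice.

Section EdgeSimplex.
Hypothesis Htri : triangle_free E.
Variables (c : forall v, L v) (z y : V) (b : Prop).
Hypothesis Hzy : E z y.

Definition edge_simplex (x : B) : Prop :=
  (projT1 x = z /\ (b \/ projT2 x = None) /\ chosen c x) \/
  (projT1 x = y /\ chosen c x).

Lemma edge_simplex_simplex : simplex X edge_simplex.
Proof.
  split.
  - intros x w Hx Hw Hne.
    destruct Hx as [[Hx1 [_ Hx]] | [Hx1 Hx]], Hw as [[Hw1 [_ Hw]] | [Hw1 Hw]].
    + apply (chosen_adj c); congruence.
    + left; rewrite Hx1, Hw1; exact Hzy.
    + left; rewrite Hx1, Hw1; exact (E_sym _ _ Hzy).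
    + apply (chosen_adj c); congruence.
  - apply (finite_of_sublist edge_simplex
      [existT _ z None; existT _ z (Some (c z)); existT _ y None; existT _ y (Some (c y))]).
    intros [v o] Hx; unfold edge_simplex, chosen in Hx; simpl in Hx.
    destruct Hx as [[-> [_ [-> | ->]]] | [-> [-> | ->]]]; simpl; tauto.
Qed.

Lemma link_edge_simplex x :
  link X edge_simplex x <-> projT1 x = z /\ projT2 x <> None /\ ~ b.
Proof.
  rewrite link_blowupE.
  assert (Hz : edge_simplex (existT _ z None)) by (left; simpl; unfold chosen; auto).
  assert (Hy : edge_simplex (existT _ y None)) by (right; simpl; unfold chosen; auto).
  assert (Hyl : edge_simplex (existT _ y (Some (c y))))
    by (right; simpl; unfold chosen; auto).
  split.
  - intros [Hbase [Hc Hl]].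
    assert (Hxz : projT1 x = z).
    { apply NNPP; intros Hxz.
      destruct (classic (projT1 x = y)) as [Hxy | Hxy].
      - destruct (classic (projT2 x = None)) as [h | h].
        + apply (Hc h); exists (existT _ y None); simpl; auto.
        + apply (Hl h); exists (existT _ y (Some (c y))); simpl.
          repeat split; auto; discriminate.
      - apply (Htri z y (projT1 x) Hzy).
        + exact (Hbase _ Hy (fun e => Hxy (eq_sym e))).
        + exact (E_sym _ _ (Hbase _ Hz (fun e => Hxz (eq_sym e)))). }
    assert (Hleaf : projT2 x <> None).
    { intros h; apply (Hc h); rewrite Hxz; exists (existT _ z None); simpl; auto. }
    repeat split; auto.
    intros Hb; apply (Hl Hleaf); rewrite Hxz.
    exists (existT _ z (Some (c z))); simpl; split; [ | split; [ | discriminate]]; auto.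
    left; simpl; unfold chosen; auto.
  - intros [Hxz [Hleaf Hnb]]; split; [ | split].
    + intros u [[Hu _] | [Hu _]] Hne; [congruence | rewrite Hu, Hxz; exact (E_sym _ _ Hzy)].
    + intros h; now destruct Hleaf.
    + intros _ [w [Hw [Hwz Hwl]]].
      destruct Hw as [[_ [[Hb | Hc] _]] | [Hwy _]]; [tauto | tauto | ].
      assert (Hyz : y = z) by congruence.
      apply (E_irrefl z); rewrite <- Hyz at 2; exact Hzy.
Qed.

Lemma edge_simplex_contains (S : B -> Prop) :
  (forall x, S x -> chosen c x) ->
  (forall x, S x -> projT1 x = z \/ projT1 x = y) -> (leaf_over S z -> b) ->
  forall x, S x -> edge_simplex x.
Proof.
  intros Hch Hbase Hb x Hx.
  destruct (Hbase x Hx) as [Hxz | Hxy]; [left | right]; auto.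
  repeat split; auto.
  destruct (classic (projT2 x = None)); auto.
  left; apply Hb; now exists x.
Qed.

End EdgeSimplex.

Lemma simplex_base_star (S : B -> Prop) (v0 : V) :
  simplex X S -> exists z, base_adjacent S z.
Proof.
  intros [Hcl _]; destruct (classic (exists x, S x)) as [[x0 Hx0] | Hno].
  - exists (projT1 x0); intros x Hx Hne.
    destruct (Hcl x x0 Hx Hx0 (fun e => Hne (f_equal _ e))) as [H | [H _]];
      [exact H | now destruct Hne].
  - exists v0; intros x Hx; destruct Hno; now exists x.
Qed.

Lemma simplex_base_in_edge (S : B -> Prop) z :
  triangle_free E -> no_isolated_vertex E ->
  simplex X S -> base_adjacent S z ->
  exists y, E z y /\ forall x, S x -> projT1 x = z \/ projT1 x = y.
Proof.
  intros Htri Hiso [Hcl _] Hz.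
  destruct (classic (exists x, S x /\ projT1 x <> z)) as [[x0 [Hx0 Hx0z]] | Hno].
  - exists (projT1 x0); split; [exact (E_sym _ _ (Hz _ Hx0 Hx0z)) | ].
    intros x Hx; apply NNPP; intros Hxzy.
    destruct (Hcl x x0 Hx Hx0 (fun e => Hxzy (or_intror (f_equal _ e)))) as [H | [H _]];
      [ | tauto].
    exact (Htri _ _ _ H (Hz _ Hx0 Hx0z) (E_sym _ _ (Hz _ Hx ltac:(tauto)))).
  - destruct (Hiso z) as [y Hy]; exists y; split; [exact Hy | ].
    intros x Hx; left; apply NNPP; intros h; apply Hno; now exists x.
Qed.

Lemma base_adjacent_unique (U : B -> Prop) u u' z z' :
  square_free E -> U u -> U u' ->
  projT1 u <> projT1 u' -> ~ E (projT1 u) (projT1 u') ->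
  base_adjacent U z -> base_adjacent U z' -> z = z'.
Proof.
  intros Hsq Hu Hu' Hne HnE.
  assert (Hboth : forall w, base_adjacent U w -> E (projT1 u) w /\ E (projT1 u') w).
  { intros w Hw.
    destruct (classic (projT1 u = w)) as [<- | h];
      [destruct HnE; exact (E_sym _ _ (Hw _ Hu' (fun e => Hne (eq_sym e)))) | ].
    destruct (classic (projT1 u' = w)) as [<- | h'];
      [destruct HnE; exact (Hw _ Hu Hne) | ].
    split; auto. }
  intros Hz Hz'; apply NNPP; intros Hzz'.
  destruct (Hboth z Hz) as [Huz Hu'z], (Hboth z' Hz') as [Huz' Hu'z'].
  exact (Hsq _ _ _ _ Hne Hzz' Huz (E_sym _ _ Hu'z) Hu'z' (E_sym _ _ Huz')).
Qed.

Definition link_decomposition (Sigma U : B -> Prop) : Prop :=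
  exists Pi Psi, simplex X Pi /\ simplex X Psi /\ (forall x, Sigma x -> Pi x) /\
    is_join X (link X U) (link X Pi) Psi.

Section Decomposition.
Hypotheses (Htri : triangle_free E) (Hsq : square_free E)
  (Hiso : no_isolated_vertex E) (HL : forall v, inhabited (L v)).
Variables (Sigma U : B -> Prop).
Hypotheses (HSigma : simplex X Sigma) (HSU : forall x, Sigma x -> U x).

Let c := pick_leaf HL Sigma U.

Lemma link_decomposition_clique :
  (exists l, forall x, U x -> In x l) ->
  (forall u u', U u -> U u' -> projT1 u <> projT1 u' -> E (projT1 u) (projT1 u')) ->
  link_decomposition Sigma U.
Proof.
  intros [l Hl] Hclique.
  exists (fun x => U x /\ chosen c x), (fun _ => False).
  split; [split | split; [apply simplex_empty | split]].
  - intros x w [Hx Hcx] [Hw Hcw] Hne.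
    destruct (classic (projT1 x = projT1 w)) as [h | h];
      [apply (chosen_adj c) | left; apply Hclique]; auto.
  - apply finite_of_sublist with (l := l); intros x [Hx _]; auto.
  - intros x Hx; split; [auto | exact (simplex_chosen HL Sigma U x HSigma Hx)].
  - apply is_join_empty, link_blowup_ext.
    + intros v; split; [intros Hv w [Hw _]; auto | intros Hv w Hw Hne].
      destruct (classic (projT2 w = None)) as [h | h]; [apply Hv; unfold chosen; auto | ].
      apply (Hv (existT _ (projT1 w) (Some (c (projT1 w))))); simpl; auto.
      split; [apply pick_leaf_in_U | right]; auto.
    + intros v; split; [intros [w [Hw [h1 h2]]] | intros [w [[Hw _] [h1 h2]]]];
        exists w; unfold chosen; auto.
    + intros v; split; [intros [w [Hw [h1 h2]]] | intros [w [[Hw _] [h1 h2]]]].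
      * exists (existT _ (projT1 w) (Some (c (projT1 w)))); simpl.
        split; [split; [apply pick_leaf_in_U | right] | split; [ | discriminate]]; auto.
      * exists w; auto.
Qed.

Lemma link_decomposition_sparse u u' z :
  U u -> U u' -> projT1 u <> projT1 u' -> ~ E (projT1 u) (projT1 u') ->
  base_adjacent U z -> link_decomposition Sigma U.
Proof.
  intros Hu Hu' Hne HnE Hz.
  destruct (simplex_base_in_edge Sigma z Htri Hiso HSigma (fun x Hx => Hz x (HSU x Hx)))
    as [y [Hzy Hfib]].
  exists (edge_simplex c z y (leaf_over U z)),
    (fun x => projT1 x = z /\ projT2 x = None /\ ~ centre_over U z).
  split; [apply edge_simplex_simplex; exact Hzy | split; [split | split]].
  - intros x w [Hx1 [Hx2 _]] [Hw1 [Hw2 _]] Hxw; destruct Hxw; apply centre_eq; congruence.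
  - apply finite_of_sublist with (l := [existT _ z None]); intros x [Hx1 [Hx2 _]].
    left; symmetry; apply centre_eq; auto.
  - apply edge_simplex_contains; auto.
    + intros x Hx; exact (simplex_chosen HL Sigma U x HSigma Hx).
    + intros [w [Hw Hwz]]; exists w; auto.
  - split; [ | split].
    + intros x; rewrite (link_edge_simplex Htri c z y _ Hzy), link_blowupE; split.
      * intros [Hbase [Hc Hl]].
        assert (Hxz : projT1 x = z)
          by exact (base_adjacent_unique U u u' _ _ Hsq Hu Hu' Hne HnE Hbase Hz).
        rewrite <- Hxz; destruct (classic (projT2 x = None)); [right | left]; auto.
      * intros [[Hxz [Hl Hnl]] | [Hxz [Hc Hnc]]];
          (split; [rewrite Hxz; exact Hz | split]); intros h; rewrite Hxz; tauto.
    + intros x [Ha [_ [Hb _]]]; rewrite (link_edge_simplex Htri c z y _ Hzy) in Ha; tauto.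
    + intros a w Ha [Hw1 [Hw2 _]]; rewrite (link_edge_simplex Htri c z y _ Hzy) in Ha.
      destruct Ha as [Ha1 [Ha2 _]]; right; split; [congruence | unfold is_centre; auto].
Qed.

Lemma link_decomposition_empty (v0 : V) :
  ~ (exists z, base_adjacent U z) -> link_decomposition Sigma U.
Proof.
  intros Hno.
  destruct (simplex_base_star Sigma v0 HSigma) as [z Hz].
  destruct (simplex_base_in_edge Sigma z Htri Hiso HSigma Hz) as [y [Hzy Hfib]].
  exists (edge_simplex c z y True), (fun _ => False).
  split; [apply edge_simplex_simplex; exact Hzy | split; [apply simplex_empty | split]].
  - apply edge_simplex_contains; auto.
    intros x Hx; exact (simplex_chosen HL Sigma U x HSigma Hx).
  - apply is_join_empty; intros x.
    rewrite (link_edge_simplex Htri c z y True Hzy), link_blowupE.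
    split; [intros [Hb _]; destruct Hno; eauto | tauto].
Qed.

Lemma link_decomposition_exists :
  (exists l, forall x, U x -> In x l) -> link_decomposition Sigma U.
Proof.
  intros Hfin.
  destruct (classic (exists u u', U u /\ U u' /\
                       projT1 u <> projT1 u' /\ ~ E (projT1 u) (projT1 u')))
    as [[u [u' [Hu [Hu' [Hne HnE]]]]] | Hclique].
  - destruct (classic (exists z, base_adjacent U z)) as [[z Hz] | Hno].
    + exact (link_decomposition_sparse u u' z Hu Hu' Hne HnE Hz).
    + exact (link_decomposition_empty (projT1 u) Hno).
  - apply link_decomposition_clique; [exact Hfin | ].
    intros u u' Hu Hu' Hne; apply NNPP; intros HnE; apply Hclique; now exists u, u'.
Qed.

End Decomposition.

End Blowup.

Theorem mainTheorem20 (V : Type) (E : V -> V -> Prop) (L : V -> Type)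
  (HE : simplicial_graph E) (Htri : triangle_free E) (Hsq : square_free E)
  (Hiso : no_isolated_vertex E) (HL : forall v, inhabited (L v))
  (Sigma Delta : blowup_vertex L -> Prop)
  (HSigma : simplex (blowup_adj E (L:=L)) Sigma)
  (HSigma_nm : ~ maximal_simplex (blowup_adj E (L:=L)) Sigma)
  (HDelta : simplex (blowup_adj E (L:=L)) Delta)
  (HDelta_nm : ~ maximal_simplex (blowup_adj E (L:=L)) Delta) :
  exists Pi Psi : blowup_vertex L -> Prop,
    simplex (blowup_adj E (L:=L)) Pi /\
    simplex (blowup_adj E (L:=L)) Psi /\
    (forall x, Sigma x -> Pi x) /\
    is_join (blowup_adj E (L:=L))
      (fun x => link (blowup_adj E (L:=L)) Sigma x /\ link (blowup_adj E (L:=L)) Delta x)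
      (link (blowup_adj E (L:=L)) Pi) Psi.
Proof.
  set (U := fun x => Sigma x \/ Delta x).
  assert (Hfin : exists l, forall x, U x -> In x l).
  { destruct HSigma as [_ [l1 H1]], HDelta as [_ [l2 H2]]; exists (l1 ++ l2).
    intros x [Hx | Hx]; apply in_or_app; [left; apply H1 | right; apply H2]; exact Hx. }
  destruct (link_decomposition_exists V E L HE Htri Hsq Hiso HL Sigma U HSigma
              (fun x Hx => or_introl Hx) Hfin)
    as [Pi [Psi [HPi [HPsi [HSPi HJ]]]]].
  exists Pi, Psi; split; [exact HPi | split; [exact HPsi | split; [exact HSPi | ]]].
  apply is_join_ext with (A' := link (blowup_adj E (L:=L)) U); [ | exact HJ].
  intros x; apply link_union.
Qed.
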